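(* Let $\ell, n_1,\dots,n_\ell$ be positive integers, let $K_1,\dots,K_\ell$ be finite fields with a common finite extension field $\mathbb{F}$, and let $n=n_1+\cdots+n_\ell$. Let $\mathcal{C}\subseteq\mathbb{F}^n$ be an $\mathbb{F}$-linear code of dimension $k\geq 1$ with generator matrix $\mathbf{G}$ (a $k\times n$ matrix over $\mathbb{F}$). Then $\mathcal{C}$ is MSRD if and only if $\mathbf{G}\mathbf{A}$ is invertible for every $n\times k$ matrix $\mathbf{A}$ of rank $k$ of the block-diagonal form $\mathbf{A}=\mathrm{diag}(\mathbf{A}_1,\dots,\mathbf{A}_\ell)$, where each $\mathbf{A}_i$ is an $n_i\times k_i$ matrix with entries in $K_i$, $k_i\leq n_i$, and $\sum_{i=1}^{\ell}k_i=k$.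
   Context: Write vectors $\mathbf{c}\in\mathbb{F}^n$ as $\mathbf{c}=(\mathbf{c}^{(1)},\dots,\mathbf{c}^{(\ell)})$ with $\mathbf{c}^{(i)}\in\mathbb{F}^{n_i}$. Fix for each $i$ an ordered basis of $\mathbb{F}$ over $K_i$ (with $m_i=[\mathbb{F}:K_i]$), and let $\Gamma_i(\mathbf{c}^{(i)})$ be the $m_i\times n_i$ matrix over $K_i$ whose $j$-th column is the coordinate vector of the $j$-th entry of $\mathbf{c}^{(i)}$ with respect to this basis. The sum-rank weight of $\mathbf{c}$ is $\mathrm{srank}(\mathbf{c})=\sum_{i=1}^\ell \mathrm{rank}_{K_i}(\Gamma_i(\mathbf{c}^{(i)}))$ (independent of the chosen bases). The minimum sum-rank distance of $\mathcal{C}$ is $d=\min\{\mathrm{srank}(\mathbf{c}):\mathbf{c}\in\mathcal{C},\ \mathbf{c}\neq 0\}$, and $\mathcal{C}$ is called MSRD (maximum sum-rank distance) if $d=n-k+1$. *)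

From HB Require Import structures.
From mathcomp Require Import all_boot all_order all_algebra.
Set Implicit Arguments. Unset Strict Implicit. Unset Printing Implicit Defensive.
Import Order.TTheory GRing.Theory Num.Theory.
Local Open Scope ring_scope.

Section SumRank.
Variable F : finFieldType.

(* An ordered basis b_1..b_m of F over a field K, where K is embedded in F
   via the (necessarily injective) ring morphism sigma : every x in F has a
   unique coordinate vector a in K^m with x = sum_r sigma(a_r) b_r. *)
Definition is_basis (K : finFieldType) (sigma : {rmorphism K -> F}) (m : nat)
  (b : 'I_m -> F) : Prop :=
  forall x : F, exists! a : 'rV[K]_m, x = \sum_(r < m) sigma (a 0 r) * b r.

Definition coordv (K : finFieldType) (sigma : {rmorphism K -> F}) (m : nat)
  (b : 'I_m -> F) (x : F) : 'rV[K]_m :=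
  odflt 0 [pick a : 'rV[K]_m | x == \sum_(r < m) sigma (a 0 r) * b r].

Definition Gamma (K : finFieldType) (sigma : {rmorphism K -> F}) (m : nat)
  (b : 'I_m -> F) (n : nat) (c : 'rV[F]_n) : 'M[K]_(m, n) :=
  \matrix_(r < m, j < n) coordv sigma b (c 0 j) 0 r.

Definition srank (l : nat) (n : 'I_l -> nat) (K : 'I_l -> finFieldType)
  (sigma : forall i, {rmorphism K i -> F}) (m : 'I_l -> nat)
  (b : forall i, 'I_(m i) -> F) (c : 'rV[F]_(\sum_(i < l) n i)) : nat :=
  (\sum_(i < l) \rank (Gamma (sigma i) (b i) (submxrow c i)))%N.

Definition min_srank_dist (l : nat) (n : 'I_l -> nat) (K : 'I_l -> finFieldType)
  (sigma : forall i, {rmorphism K i -> F}) (m : 'I_l -> nat)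
  (b : forall i, 'I_(m i) -> F) (k : nat) (G : 'M[F]_(k, \sum_(i < l) n i)) : nat :=
  \big[minn/(\sum_(i < l) n i).+1]_(c : 'rV[F]_(\sum_(i < l) n i) |
      (c <= G)%MS && (c != 0)) srank sigma b c.

Definition MSRD (l : nat) (n : 'I_l -> nat) (K : 'I_l -> finFieldType)
  (sigma : forall i, {rmorphism K i -> F}) (m : 'I_l -> nat)
  (b : forall i, 'I_(m i) -> F) (k : nat) (G : 'M[F]_(k, \sum_(i < l) n i)) : Prop :=
  min_srank_dist sigma b G = ((\sum_(i < l) n i) - k + 1)%N.

End SumRank.

Definition blkdiag (T : nmodType) (l : nat) (p q : 'I_l -> nat)
  (B : forall i, 'M[T]_(p i, q i)) : 'M[T]_(\sum_(i < l) p i, \sum_(i < l) q i) :=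
  \mxblock_(i < l, j < l)
     (\matrix_(a < p i, b < q j)
        if (i == j) then
          (if insub (val b) is Some b' then B i a b' else 0)
        else 0).

From HB Require Import structures.
From mathcomp Require Import all_boot all_order all_algebra.
From mathcomp Require Import zify.
Import Order.TTheory GRing.Theory.
Local Open Scope ring_scope.
Set Implicit Arguments. Unset Strict Implicit. Unset Printing Implicit Defensive.

(* Since the coordinates of F over K_i are unique, the F-linear condition
   c^(i) A_i = 0 for a matrix A_i over K_i is equivalent to the K_i-linear
   condition Gamma_i(c^(i)) A_i = 0.  Hence a block-diagonal
   A = diag(A_1, ..., A_l) with blocks of full column rank k_i annihilating c
   exists iff k_i <= n_i - rank Gamma_i(c^(i)) for all i, and one with
   sum k_i = k exists iff srank(c) <= n - k.  On the other hand GA is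
   singular iff some nonzero codeword uG satisfies uGA = 0.  So all these GA
   are invertible iff every nonzero codeword has weight > n - k, i.e.
   d >= n - k + 1; the same argument with sum k_i = k - 1 yields the
   Singleton bound d <= n - k + 1. *)

Section MatrixFacts.
Variable F : fieldType.

Lemma exists_nz_left_ker m n (M : 'M[F]_(m, n)) :
  (\rank M < m)%N -> exists2 u : 'rV_m, u != 0 & u *m M = 0.
Proof.
move=> rM; exists (nz_row (kermx M)).
  by rewrite nz_row_eq0 -mxrank_eq0 mxrank_ker subn_eq0 -ltnNge.
by apply/sub_kermxP; apply: nz_row_sub.
Qed.

Lemma exists_nz_sub_ker k n p (G : 'M[F]_(k, n)) (M : 'M[F]_(n, p)) :
    row_free G -> (\rank (G *m M) < k)%N ->
  exists2 c : 'rV_n, (c <= G)%MS && (c != 0) & c *m M = 0.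
Proof.
move=> fG /exists_nz_left_ker[u u_nz uGM]; exists (u *m G).
  by rewrite submxMl mulmx_free_eq0.
by rewrite -mulmxA.
Qed.

Lemma mxrank_full_colP m n (M : 'M[F]_(m, n)) :
  \rank M = n <-> (forall v : 'cV_n, M *m v = 0 -> v = 0).
Proof.
have freeE : row_free M^T = (\rank M == n) by rewrite /row_free mxrank_tr.
split=> [/eqP | Minj].
  rewrite -freeE => fMT v Mv0; apply: trmx_inj; apply/eqP.
  by rewrite trmx0 -(mulmx_free_eq0 _ fMT) -trmx_mul Mv0 trmx0.
apply/eqP; rewrite -freeE; apply: inj_row_free => v vMT0; apply: trmx_inj.
by rewrite trmx0; apply: Minj; rewrite -[M]trmxK -trmx_mul vMT0 trmx0.
Qed.

Lemma castmx_cols_unitmx k t (e : t = k) (X : 'M[F]_(k, t)) :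
  (castmx (erefl k, e) X \in unitmx) = row_free X.
Proof. by subst k; rewrite castmx_id row_free_unit. Qed.

End MatrixFacts.

Section BlockDiagonal.
Variables (F : fieldType) (l : nat) (p q : 'I_l -> nat).
Variable B : forall i, 'M[F]_(p i, q i).

Lemma blkdiag_block_diag i :
  \matrix_(a < p i, c < q i)
     (if i == i then (if insub (val c) is Some c' then B i a c' else 0) else 0)
  = B i.
Proof. by apply/matrixP => a c; rewrite mxE eqxx valK. Qed.

Lemma blkdiag_block_off i j : i != j ->
  \matrix_(a < p i, c < q j)
     (if i == j then (if insub (val c) is Some c' then B i a c' else 0) else 0)
  = 0.
Proof. by move=> /negbTE ij; apply/matrixP => a c; rewrite !mxE ij. Qed.

Lemma submxrow_mul_blkdiag r (u : 'M[F]_(r, \sum_(i < l) p i)) i :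
  submxrow (u *m blkdiag B) i = submxrow u i *m B i.
Proof.
rewrite -{1}(submxrowK u) mul_mxrow_mxblock mxrowK (bigD1 i) //= big1 ?addr0.
  by rewrite blkdiag_block_diag.
by move=> j ji; rewrite blkdiag_block_off ?mulmx0.
Qed.

Lemma submxcol_blkdiag_mul r (v : 'M[F]_(\sum_(i < l) q i, r)) i :
  submxcol (blkdiag B *m v) i = B i *m submxcol v i.
Proof.
rewrite -{1}(submxcolK v) /blkdiag mxblockEv mxcol_mul mxcolK mul_mxrow_mxcol.
rewrite (bigD1 i) //= big1 ?addr0; first by rewrite blkdiag_block_diag.
by move=> j ji; rewrite blkdiag_block_off 1?eq_sym ?mul0mx.
Qed.

Definition single_mxcol i r (w : 'M[F]_(q i, r)) : 'M[F]_(\sum_(j < l) q j, r) :=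
  \mxcol_j \matrix_(a < q j, c < r)
     (if i == j then (if insub (val a) is Some a' then w a' c else 0) else 0).

Lemma submxcol_single_diag i r (w : 'M[F]_(q i, r)) :
  submxcol (single_mxcol w) i = w.
Proof. by rewrite mxcolK; apply/matrixP => a c; rewrite mxE eqxx valK. Qed.

Lemma submxcol_single_off i j r (w : 'M[F]_(q i, r)) :
  i != j -> submxcol (single_mxcol w) j = 0.
Proof.
by move=> /negbTE ij; rewrite mxcolK; apply/matrixP => a c; rewrite !mxE ij.
Qed.

Lemma mxrank_blkdiag_full :
  \rank (blkdiag B) = (\sum_(i < l) q i)%N <-> forall i, \rank (B i) = q i.
Proof.
split=> [/mxrank_full_colP Binj i | rB].
  apply/mxrank_full_colP => w Bw0; rewrite -(submxcol_single_diag w).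
  have -> : single_mxcol w = 0.
    apply/Binj/mxcolP => j; rewrite submxcol_blkdiag_mul submxcol0.
    have [<-|ij] := eqVneq i j; first by rewrite submxcol_single_diag.
    by rewrite submxcol_single_off ?mulmx0.
  by rewrite submxcol0.
apply/mxrank_full_colP => v Bv0; apply/mxcolP => i; rewrite submxcol0.
apply/(mxrank_full_colP (B i)).1 => //.
by rewrite -submxcol_blkdiag_mul Bv0 submxcol0.
Qed.

End BlockDiagonal.

Section Coordinates.
Variables (F K : finFieldType) (sigma : {rmorphism K -> F}) (m : nat).
Variable b : 'I_m -> F.
Hypothesis b_basis : is_basis sigma b.

Lemma coordvE x : x = \sum_(r < m) sigma (coordv sigma b x 0 r) * b r.
Proof.
rewrite /coordv; case: pickP => [a /eqP // | no_coord].
by have [a [xE _]] := b_basis x; move: (no_coord a); rewrite -xE eqxx.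
Qed.

Lemma coord_eq0 (a : 'rV[K]_m) : \sum_(r < m) sigma (a 0 r) * b r = 0 -> a = 0.
Proof.
move=> a0; have [z [_ z_uniq]] := b_basis 0.
rewrite -(z_uniq a (esym a0)); apply: z_uniq.
by rewrite big1 // => r _; rewrite mxE rmorph0 mul0r.
Qed.

Lemma mul_map_mx_coord p q (c : 'rV[F]_p) (X : 'M[K]_(p, q)) j :
  (c *m map_mx sigma X) 0 j
  = \sum_(r < m) sigma ((Gamma sigma b c *m X) r j) * b r.
Proof.
rewrite mxE; under eq_bigr => t _ do rewrite mxE {1}(coordvE (c 0 t)) mulr_suml.
rewrite exchange_big; apply: eq_bigr => r _; rewrite mxE rmorph_sum mulr_suml.
by apply: eq_bigr => t _; rewrite !mxE rmorphM mulrAC.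
Qed.

Lemma mul_map_mx_eq0 p q (c : 'rV[F]_p) (X : 'M[K]_(p, q)) :
  c *m map_mx sigma X = 0 <-> Gamma sigma b c *m X = 0.
Proof.
split=> cX0.
  apply/matrixP => r j.
  have col0 : \row_r' (Gamma sigma b c *m X) r' j = 0.
    apply: coord_eq0; transitivity ((c *m map_mx sigma X) 0 j).
      by rewrite mul_map_mx_coord; apply: eq_bigr => r' _; rewrite mxE.
    by rewrite cX0 mxE.
  by have /matrixP/(_ 0 r) := col0; rewrite !mxE.
apply/matrixP => i j; rewrite ord1 mul_map_mx_coord cX0 mxE big1 // => r _.
by rewrite mxE rmorph0 mul0r.
Qed.

End Coordinates.

Section KernelColumns.
Variables (K : fieldType) (m p : nat) (M : 'M[K]_(m, p)).

Definition ker_cols t : 'M[K]_(p, t) := (pid_mx t *m row_base (kermx M^T))^T.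

Lemma mxrank_ker_cols t : (t <= p - \rank M)%N -> \rank (ker_cols t) = t.
Proof.
move=> t_le; rewrite mxrank_tr mxrankMfree ?row_base_free // rank_pid_mx //.
by rewrite mxrank_ker mxrank_tr.
Qed.

Lemma mul_ker_cols t : M *m ker_cols t = 0.
Proof.
apply: trmx_inj; rewrite trmx_mul trmxK trmx0; apply/sub_kermxP.
by apply: submx_trans (submxMl _ _) _; rewrite eq_row_base.
Qed.

End KernelColumns.

Lemma split_leq_sum l (f : 'I_l -> nat) t : (t <= \sum_(i < l) f i)%N ->
  exists g : 'I_l -> nat, (forall i, g i <= f i)%N /\ (\sum_(i < l) g i)%N = t.
Proof.
elim: l f t => [|l IHl] f t.
  by rewrite big_ord0 leqn0 => /eqP->; exists (fun=> 0%N); rewrite big_ord0.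
rewrite big_ord_recl => t_le.
have /IHl[g [g_le gE]] :
  (t - minn t (f ord0) <= \sum_(i < l) f (lift ord0 i))%N by lia.
exists (fun i => if unlift ord0 i is Some j then g j else minn t (f ord0)).
split=> [i | ]; last first.
  rewrite big_ord_recl unlift_none.
  by under eq_bigr do rewrite liftK; rewrite gE; lia.
by case: (unliftP ord0 i) => [j -> | ->];
  rewrite ?liftK ?unlift_none ?g_le ?geq_minr.
Qed.

Section SumRankCodes.
Variables (F : finFieldType) (l : nat) (n : 'I_l -> nat).
Variables (K : 'I_l -> finFieldType) (sigma : forall i, {rmorphism K i -> F}).
Variables (m : 'I_l -> nat) (b : forall i, 'I_(m i) -> F).
Arguments b : clear implicits.
Hypothesis b_basis : forall i, is_basis (sigma i) (b i).

Local Notation blkdiag_map A := (blkdiag (fun i => map_mx (sigma i) (A i))).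

Lemma srank_ker_blkdiag kk (A : forall i, 'M[K i]_(n i, kk i)) c :
    (forall i, \rank (A i) = kk i) -> c *m blkdiag_map A = 0 ->
  (srank sigma b c + \sum_(i < l) kk i <= \sum_(i < l) n i)%N.
Proof.
move=> rA cA0; rewrite /srank -big_split /=; apply: leq_sum => i _.
rewrite -rA; apply: mulmx0_rank_max; apply/(mul_map_mx_eq0 (b_basis i)).
move/(congr1 (fun u => submxrow u i)): cA0.
by rewrite submxrow_mul_blkdiag submxrow0.
Qed.

Lemma ker_blkdiag_of_srank c t : (t + srank sigma b c <= \sum_(i < l) n i)%N ->
  exists kk (A : forall i, 'M[K i]_(n i, kk i)),
    [/\ forall i, \rank (A i) = kk i, (\sum_(i < l) kk i)%N = t
      & c *m blkdiag_map A = 0].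
Proof.
move=> t_le; pose Gam i := Gamma (sigma i) (b i) (submxrow c i).
have {}t_le : (t + \sum_(i < l) \rank (Gam i) <= \sum_(i < l) n i)%N := t_le.
have /split_leq_sum[kk [kk_le kkE]] :
    (t <= \sum_(i < l) (n i - \rank (Gam i)))%N.
  suff -> : (\sum_(i < l) (n i - \rank (Gam i))
             = \sum_(i < l) n i - \sum_(i < l) \rank (Gam i))%N by lia.
  by apply: sumnB => i _; apply: rank_leq_col.
exists kk, (fun i => ker_cols (Gam i) (kk i)); split=> // [i | ].
  exact: mxrank_ker_cols (kk_le i).
apply/mxrowP => i; rewrite submxrow_mul_blkdiag submxrow0.
exact/(mul_map_mx_eq0 (b_basis i))/mul_ker_cols.
Qed.

Lemma min_srank_dist_Singleton k (G : 'M[F]_(k, \sum_(i < l) n i)) :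
    row_free G -> (0 < k)%N ->
  (min_srank_dist sigma b G <= \sum_(i < l) n i - k + 1)%N.
Proof.
move=> fG k_gt0.
have kN : (k <= \sum_(i < l) n i)%N by rewrite -(eqP fG) rank_leq_col.
have /split_leq_sum[kk [kk_le kkE]] : (k.-1 <= \sum_(i < l) n i)%N by lia.
pose A i := pid_mx (kk i) : 'M[K i]_(n i, kk i).
have rA i : \rank (A i) = kk i by rewrite rank_pid_mx ?kk_le.
have /(exists_nz_sub_ker fG)[c /andP[cG c_nz] cA0] :
    (\rank (G *m blkdiag_map A) < k)%N.
  by rewrite (leq_ltn_trans (rank_leq_col _)) // kkE; lia.
have d_le : (min_srank_dist sigma b G <= srank sigma b c)%N.
  have := @bigmin_le_cond _ _ _ (\sum_(i < l) n i).+1 c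
    (fun c => (c <= G)%MS && (c != 0)) (srank sigma b).
  by rewrite leEnat minEnat cG c_nz; apply.
have := srank_ker_blkdiag rA cA0; lia.
Qed.

Lemma MSRD_srankP k (G : 'M[F]_(k, \sum_(i < l) n i)) :
    row_free G -> (0 < k)%N ->
  MSRD sigma b G <->
  forall c, (c <= G)%MS -> c != 0 -> (\sum_(i < l) n i - k < srank sigma b c)%N.
Proof.
move=> fG k_gt0; have d_le := min_srank_dist_Singleton fG k_gt0.
rewrite /MSRD; transitivity (\sum_(i < l) n i - k < min_srank_dist sigma b G)%N.
  by split=> [-> | ?]; lia.
have := bigmin_gtP (\sum_(i < l) n i).+1 (\sum_(i < l) n i - k)%N
  (fun c => (c <= G)%MS && (c != 0)) (srank sigma b).
rewrite !ltEnat minEnat => dP; split=> [/dP[_ wt] c cG c_nz | wt].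
  by apply: wt; rewrite cG c_nz.
by apply/dP; split=> [|c /andP[]]; [lia | exact: wt].
Qed.

End SumRankCodes.

Theorem mainTheorem1
  (F : finFieldType) (l : nat) (n : 'I_l -> nat)
  (K : 'I_l -> finFieldType) (sigma : forall i, {rmorphism K i -> F})
  (m : 'I_l -> nat) (b : forall i, 'I_(m i) -> F)
  (k : nat) (G : 'M[F]_(k, \sum_(i < l) n i)) :
  (0 < l)%N ->
  (forall i, 0 < n i)%N ->
  (forall i, is_basis (sigma i) (b i)) ->
  (1 <= k)%N ->
  \rank G = k ->
  MSRD sigma b G <->
  (forall (kk : 'I_l -> nat) (A : forall i, 'M[K i]_(n i, kk i))
          (Hk : (\sum_(i < l) kk i)%N = k),
     (forall i, kk i <= n i)%N ->
     \rank (blkdiag (fun i => map_mx (sigma i) (A i))) = k ->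
     castmx (erefl k, Hk) (G *m blkdiag (fun i => map_mx (sigma i) (A i)))
       \in unitmx).
Proof.
move=> _ _ b_basis k_gt0 rG; have fG : row_free G by rewrite /row_free rG.
rewrite (MSRD_srankP b_basis fG k_gt0).
split=> [heavy kk A kkE _ rA | GA_unit c cG c_nz].
  have rAi i : \rank (A i) = kk i.
    rewrite -(mxrank_map (sigma i)); move: i.
    by apply/mxrank_blkdiag_full; rewrite rA.
  rewrite castmx_cols_unitmx; apply: contraT => GA_singular.
  have /(exists_nz_sub_ker fG)[c /andP[cG c_nz] cA0] :
      (\rank (G *m blkdiag (fun i => map_mx (sigma i) (A i))) < k)%N.
    by rewrite ltn_neqAle GA_singular rank_leq_row.
  have := heavy c cG c_nz; have := srank_ker_blkdiag b_basis rAi cA0; lia.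
rewrite ltnNge; apply/negP => light.
have [|kk [A [rA kkE cA0]]] := ker_blkdiag_of_srank b_basis (c := c) (t := k).
  by have := rank_leq_col G; rewrite rG; lia.
have rAi : \rank (blkdiag (fun i => map_mx (sigma i) (A i))) = k.
  by rewrite -kkE; apply/mxrank_blkdiag_full => i; rewrite mxrank_map.
have kk_le i : (kk i <= n i)%N by rewrite -rA rank_leq_row.
have := GA_unit kk A kkE kk_le rAi.
rewrite castmx_cols_unitmx => GA_free.
case/submxP: cG c_nz cA0 => D ->; rewrite -mulmxA => /negP D_nz /eqP.
by rewrite mulmx_free_eq0 // => /eqP D0; apply: D_nz; rewrite D0 mul0mx.
Qed.
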